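(* For every integer $n\ge 5$, $\mathrm{mob}(K(n,2))=\max\left\{4,\left\lfloor \frac{n-3}{2}\right\rfloor\right\}$.
   Context: The Kneser graph $K(n,2)$ has as vertices all $2$-element subsets of $\{1,\dots,n\}$, two vertices being adjacent iff the subsets are disjoint. A set $S$ of vertices is a general position set if no three distinct vertices of $S$ lie on a common shortest path. Place one robot on each vertex of a general position set $S$; robots move one at a time, and a move is legal if a robot moves to an adjacent unoccupied vertex and the new set of occupied vertices is again a general position set. $S$ is a mobile general position set if some finite sequence of legal moves results in every vertex being occupied by some robot at some moment. $\mathrm{mob}$ of a graph is the maximum cardinality of a mobile general position set of it. *)

From mathcomp Require Import all_boot.
Set Implicit Arguments. Unset Strict Implicit. Unset Printing Implicit Defensive.

Section GraphDefs.
Variables (T : finType) (e : rel T).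

Definition shortest_path (x : T) (p : seq T) : Prop :=
  path e x p /\
  forall q : seq T, path e x q -> last x q = last x p -> size p <= size q.

Definition on_common_geodesic (u v w : T) : Prop :=
  exists x p, shortest_path x p /\ [/\ u \in x :: p, v \in x :: p & w \in x :: p].

Definition gp_set (S : {set T}) : Prop :=
  forall u v w, u \in S -> v \in S -> w \in S ->
    u != v -> v != w -> u != w -> ~ on_common_geodesic u v w.

Definition legal_move (S S' : {set T}) : Prop :=
  exists u v, [/\ u \in S, v \notin S, e u v, S' = v |: (S :\ u) & gp_set S'].

Definition mobile_gp_set (S : {set T}) : Prop :=
  gp_set S /\
  exists (k : nat) (C : nat -> {set T}),
    [/\ C 0 = S,
        (forall i, i < k -> legal_move (C i) (C i.+1)) &
        (forall x : T, exists2 i, i <= k & x \in C i)].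

Definition is_mob (m : nat) : Prop :=
  (exists S : {set T}, mobile_gp_set S /\ #|S| = m) /\
  (forall S : {set T}, mobile_gp_set S -> #|S| <= m).

End GraphDefs.

Definition kneser_vertex (n : nat) := {A : {set 'I_n} | #|A| == 2}.

Definition kneser_adj (n : nat) : rel (kneser_vertex n) :=
  fun u v => [disjoint val u & val v].

From mathcomp Require Import all_boot zify.
From Stdlib Require Import Relation_Operators Operators_Properties.

(* Pairwise disjoint pairs form a clique, hence a general
   position set.  If at least three points are uncovered, any pair of the
   clique can be moved onto uncovered points, so every vertex can first be
   vacated and then occupied: k disjoint pairs are mobile when n >= 2k + 3.
   A star of four pairs {x, y}, y in L, is mobile too: replacing {x, d} by
   {b, c} (b, c in L) keeps general position, and from there {b, c} can move
   to {x, f}, which exchanges the leaf d for an arbitrary new leaf f.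

   K(n,2) has diameter 2, so general position means that no
   induced path a - b - c occurs.  Let S be mobile with |S| >= 5.  If S has
   no edge, its pairs share a point and no legal move is possible.  If S has
   an edge pq and a non-edge, all pairs of S lie in the four points of p and
   q, and legal moves keep them there.  So S is a clique, and a large clique
   can only move a pair onto uncovered points.  When n <= 2|S| + 2 these form
   at most one pair, so the pairs of S and the uncovered pair are never
   broken up, and a pair meeting two of them is never occupied. *)

Set Implicit Arguments. Unset Strict Implicit. Unset Printing Implicit Defensive.

Lemma disjointP (T : finType) (A B : {set T}) :
  reflect (forall x, x \in A -> x \notin B) [disjoint A & B].
Proof. by rewrite disjoint_subset; apply: (iffP subsetP) => AB x /AB; rewrite inE. Qed.

Lemma disjointNP (T : finType) (A B : {set T}) :
  reflect (exists2 x, x \in A & x \in B) (~~ [disjoint A & B]).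
Proof.
rewrite -setI_eq0; apply: (iffP (set0Pn _)) => [[x]|[x xA xB]].
  by rewrite inE => /andP[]; exists x.
by exists x; rewrite inE xA.
Qed.

Lemma set2_of_card2 (T : finType) (A : {set T}) x y :
  #|A| = 2 -> x != y -> x \in A -> y \in A -> A = [set x; y].
Proof.
move=> cA xy xA yA; apply/esym/eqP; rewrite eqEcard subUset !sub1set xA yA.
by rewrite cards2 xy cA.
Qed.

Lemma set2_inj (T : finType) (x y z : T) : y != x -> [set x; y] = [set x; z] -> y = z.
Proof.
move=> yx E; have : y \in [set x; z] by rewrite -E !inE eqxx orbT.
by rewrite !inE (negbTE yx) => /eqP.
Qed.

Lemma card_set3_le (T : finType) (a b c : T) : #|[set a; b; c]| <= 3.
Proof.
apply: leq_trans (leq_card_setU _ _).1 _; rewrite cards1 cards2 addn1 ltnS.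
by case: (a != b).
Qed.

Section Moves.
Variables (T : finType) (e : rel T).

Definition reachable := clos_refl_trans {set T} (legal_move e).

Lemma legal_move_card (C C' : {set T}) : legal_move e C C' -> #|C'| = #|C|.
Proof.
case=> u [v [uC vC _ -> _]].
by rewrite cardsU1 (cardsD1 u C) uC !inE (negbTE vC) andbF.
Qed.

Lemma legal_move_sym (C C' : {set T}) :
  symmetric e -> gp_set e C -> legal_move e C C' -> legal_move e C' C.
Proof.
move=> e_sym gC [u [v [uC vC euv -> _]]].
have uv : u != v by apply: contraNneq vC => <-.
exists v, u; split => //.
- by rewrite !inE eqxx.
- by rewrite !inE eqxx /= orbF.
- by rewrite e_sym.
apply/setP => x; rewrite !inE.
have [->|xu] := eqVneq x u; first by rewrite uC.
by have [->|] := eqVneq x v; rewrite ?(negbTE vC) ?andbF.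
Qed.

Lemma reachable_sym (S S' : {set T}) :
  symmetric e -> gp_set e S -> reachable S S' -> reachable S' S.
Proof.
move=> e_sym + /clos_rt_rt1n_iff SS'; elim: SS' => [C _|C C1 C2 m _ IH gC]; first exact: rt_refl.
have [_ [_ [_ _ _ _ gC1]]] := m.
exact: rt_trans (IH gC1) (rt_step _ _ _ _ (legal_move_sym e_sym gC m)).
Qed.

Definition visits (S : {set T}) (l : seq T) :=
  exists k (C : nat -> {set T}),
    [/\ C 0 = S, forall i, i < k -> legal_move e (C i) (C i.+1) &
        forall x, x \in l -> exists2 i, i <= k & x \in C i].

Lemma visits_nil (S : {set T}) : visits S [::].
Proof. by exists 0, (fun=> S). Qed.

Lemma visits_cons (S : {set T}) x l : x \in S -> visits S l -> visits S (x :: l).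
Proof.
move=> xS [k [C [C0 HC Hl]]]; exists k, C; split=> // y.
by rewrite inE => /orP[/eqP-> | /Hl //]; exists 0; rewrite ?C0.
Qed.

Lemma visits_reachable (S S' : {set T}) l : reachable S S' -> visits S' l -> visits S l.
Proof.
move/clos_rt_rt1n_iff; elim=> // C C1 C2 m _ IH /IH [k [D [D0 HD Hl]]].
exists k.+1, (fun i => if i is i'.+1 then D i' else C); split=> //.
- by case=> [_|i /HD //]; rewrite D0.
- by move=> x /Hl [i ik xi]; exists i.+1.
Qed.

Lemma mobile_of_reachable (S : {set T}) : symmetric e -> gp_set e S ->
  (forall x, exists2 S', reachable S S' & x \in S') -> mobile_gp_set e S.
Proof.
move=> e_sym gS reach; split=> //.
have [k [C [C0 HC Hl]]] : visits S (enum T).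
  elim: (enum T) => [|x l IH]; first exact: visits_nil.
  have [S' SS' xS'] := reach x.
  apply: (visits_reachable SS' (visits_cons xS' _)).
  exact: visits_reachable (reachable_sym e_sym gS SS') IH.
by exists k, C; split=> // x; apply: Hl; rewrite mem_enum.
Qed.

Lemma mobile_invariant (P : {set T} -> Prop) (S : {set T}) :
  mobile_gp_set e S -> P S -> (forall C C', P C -> legal_move e C C' -> P C') ->
  forall x, exists2 C, P C & x \in C.
Proof.
move=> [_ [k [C [C0 HC Hcov]]]] PS Pstep x.
have PC i : i <= k -> P (C i).
  by elim: i => [|i IH] ik; [rewrite C0 | apply: Pstep (HC i ik); apply/IH/ltnW].
by have [i ik xi] := Hcov x; exists (C i); first exact: PC.
Qed.

End Moves.

Section CliquesAndStableSets.
Variables (T : finType) (e : rel T).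

Definition clique (S : {set T}) := [forall a in S, forall b in S, (a != b) ==> e a b].

Definition stable (S : {set T}) := [forall a in S, forall b in S, ~~ e a b].

Lemma cliqueP (S : {set T}) :
  reflect {in S &, forall a b, a != b -> e a b} (clique S).
Proof.
apply: (iffP forall_inP) => [cS a b aS bS ab | cS a aS].
  by move/forall_inP/(_ b bS)/implyP: (cS a aS); apply.
by apply/forall_inP => b bS; apply/implyP; apply: cS.
Qed.

Lemma stableP (S : {set T}) : reflect {in S &, forall a b, ~~ e a b} (stable S).
Proof.
apply: (iffP forall_inP) => [sS a b aS | sS a aS]; first by move/forall_inP: (sS a aS); apply.
by apply/forall_inP => b bS; apply: sS.
Qed.

Lemma cliquePn (S : {set T}) :
  reflect (exists a b, [/\ a \in S, b \in S, a != b & ~~ e a b]) (~~ clique S).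
Proof.
apply: (iffP idP) => [|[a [b [aS bS ab nab]]]]; last first.
  by apply/negP => /cliqueP /(_ a b aS bS ab); apply/negP.
rewrite negb_forall_in => /exists_inP [a aS]; rewrite negb_forall_in => /exists_inP [b bS].
by rewrite negb_imply => /andP[ab nab]; exists a, b.
Qed.

Lemma stablePn (S : {set T}) :
  reflect (exists a b, [/\ a \in S, b \in S & e a b]) (~~ stable S).
Proof.
apply: (iffP idP) => [|[a [b [aS bS eab]]]]; last first.
  by apply/negP => /stableP /(_ a b aS bS); rewrite eab.
rewrite negb_forall_in => /exists_inP [a aS]; rewrite negb_forall_in => /exists_inP [b bS].
by rewrite negbK => eab; exists a, b.
Qed.

End CliquesAndStableSets.

Section DiameterTwo.
Variables (T : finType) (e : rel T).
Hypothesis e_irr : irreflexive e.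
Hypothesis diam2 : forall x y, exists p, [/\ path e x p, last x p = y & size p <= 2].

Definition induced_P3 (a b c : T) := [&& e a b, e b c, a != c & ~~ e a c].

(* Geodesics have at most three vertices, so three distinct vertices on a
   geodesic span an induced path. *)
Lemma gp_setP (S : {set T}) :
  gp_set e S <-> forall a b c, a \in S -> b \in S -> c \in S -> ~~ induced_P3 a b c.
Proof.
split=> [gS a b c aS bS cS | noP3 u v w uS vS wS uv vw uw [x [p [[px pmin] mem]]]].
  apply/negP => /and4P[eab ebc ac nac].
  have ab : a != b by apply: contraTneq eab => ->; rewrite e_irr.
  have bc : b != c by apply: contraTneq ebc => ->; rewrite e_irr.
  apply: (gS a b c) => //; exists a, [:: b; c].
  split; last by rewrite !inE !eqxx !orbT.
  split=> [|[|c' [|? ?]] //=]; first by rewrite /= eab ebc.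
    by move=> _ ca; rewrite ca eqxx in ac.
  by rewrite andbT => eac' ca; rewrite -ca eac' in nac.
have [q [qx qlast qsize]] := diam2 x (last x p).
have {q qx qlast qsize} := leq_trans (pmin q qx qlast) qsize.
case: p px pmin mem => [|y [|z [|? ?]]] //= + pmin []; rewrite !inE.
- by move=> _ /eqP uE /eqP vE; rewrite uE vE eqxx in uv.
- by move=> _; do 3!case/orP=> /eqP ?; subst; rewrite ?eqxx in uv vw uw.
move=> /and3P[exy eyz _] + + + _.
have xz : x != z by apply/eqP => xz; have := pmin [::]; rewrite /= xz => /(_ isT erefl).
have nxz : ~~ e x z by apply/negP => exz; have := pmin [:: z]; rewrite /= exz => /(_ isT erefl).
have P3 : induced_P3 x y z by rewrite /induced_P3 exy eyz xz nxz.
do 3!case/or3P=> /eqP ?; subst; rewrite ?eqxx in uv vw uw => //;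
  by move: P3; apply/negP; apply: noP3.
Qed.

Lemma gp_set_trans (S : {set T}) a b c :
  gp_set e S -> a \in S -> b \in S -> c \in S -> e a b -> e b c -> a != c -> e a c.
Proof.
move=> /gp_setP/(_ a b c) noP3 aS bS cS eab ebc ac.
by apply: contraNT (noP3 aS bS cS) => nac; rewrite /induced_P3 eab ebc ac.
Qed.

Lemma gp_set_nbr_uniq (S : {set T}) :
  (forall a b c, a \in S -> b \in S -> c \in S -> e a b -> e b c -> a = c) -> gp_set e S.
Proof.
move=> uniq_nbr; apply/gp_setP => a b c aS bS cS.
by apply/negP => /and4P[eab ebc + _]; rewrite (uniq_nbr a b c) ?eqxx.
Qed.

Lemma clique_gp (S : {set T}) : clique e S -> gp_set e S.
Proof.
move/cliqueP => cS; apply/gp_setP => a b c aS bS cS'.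
by apply/negP => /and4P[_ _ ac]; rewrite cS.
Qed.

End DiameterTwo.

Section Kneser.
Variable n : nat.
Local Notation V := (kneser_vertex n).
Local Notation adj := (@kneser_adj n).

Lemma card_kv (v : V) : #|val v| = 2.
Proof. by case: v => A /= /eqP. Qed.

Lemma kvP (v : V) : exists a b, a != b /\ val v = [set a; b].
Proof. by apply/cards2P; rewrite card_kv. Qed.

Lemma kv_of_pair (a b : 'I_n) : a != b -> exists v : V, val v = [set a; b].
Proof.
move=> ab; have P : #|[set a; b]| == 2 by rewrite cards2 ab.
by exists (exist (fun A : {set 'I_n} => #|A| == 2) _ P).
Qed.

Lemma kv_of_card (A : {set 'I_n}) : 1 < #|A| -> exists v : V, val v \subset A.
Proof.
case/card_gt1P => a [b [aA bA ab]]; have [v vE] := kv_of_pair ab.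
by exists v; rewrite vE subUset !sub1set aA bA.
Qed.

Lemma kv_other (v : V) x : x \in val v -> exists2 y, y != x & val v = [set x; y].
Proof.
have [a [b [ab ->]]] := kvP v; rewrite !inE => /orP[] /eqP->.
  by exists b; rewrite // eq_sym.
by exists a; rewrite // setUC.
Qed.

Lemma kv_eq (u v : V) x y : x != y -> x \in val u -> y \in val u ->
  x \in val v -> y \in val v -> u = v.
Proof.
move=> xy xu yu xv yv; apply: val_inj.
by rewrite (set2_of_card2 (card_kv u) xy xu yu) (set2_of_card2 (card_kv v) xy xv yv).
Qed.

Lemma kneser_adj_sym : symmetric adj.
Proof. by move=> u v; rewrite /kneser_adj disjoint_sym. Qed.

Lemma kneser_adj_irr : irreflexive adj.
Proof.
move=> v; apply/negP => /disjoint_setI0; rewrite setIid => v0.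
by have := card_kv v; rewrite v0 cards0.
Qed.

Lemma kv_sub_eq (u v : V) : val u \subset val v -> u = v.
Proof. by move=> uv; apply/val_inj/eqP; rewrite eqEcard uv !card_kv. Qed.

Lemma card_adj_ge (D : {set V}) (v : V) :
  (forall a d1 d2, a \in val v -> d1 \in D -> d2 \in D ->
     a \in val d1 -> a \in val d2 -> d1 = d2) ->
  #|D| <= #|[set d in D | adj d v]| + 2.
Proof.
move=> uniq_pt; have [a [b [_ vE]]] := kvP v.
have le1 y : y \in val v -> #|[set d in D | y \in val d]| <= 1.
  move=> yv; apply/card_le1_eqP => d1 d2; rewrite !inE => /andP[d1D y1] /andP[d2D y2].
  by apply/esym; apply: (uniq_pt y).
have sub : D :\: [set d | adj d v] \subset
           [set d in D | a \in val d] :|: [set d in D | b \in val d].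
  apply/subsetP => d; rewrite !inE => /andP[/disjointNP [z zd + dD]].
  by rewrite vE !inE dD => /orP[] /eqP <-; rewrite zd ?orbT.
rewrite -(cardsID [set d | adj d v] D) -setIdE leq_add2l.
apply: leq_trans (subset_leq_card sub) _; apply: leq_trans (leq_card_setU _ _).1 _.
have [av bv] : a \in val v /\ b \in val v by rewrite vE !inE !eqxx orbT.
exact: leq_add (le1 a av) (le1 b bv).
Qed.

Lemma nonadj_mem (d e : V) y z : ~~ adj e d -> val e = [set y; z] -> y \notin val d -> z \in val d.
Proof.
case/disjointNP => w we wd eE yd; move: we; rewrite eE !inE => /orP[] /eqP wE.
  by rewrite -wE wd in yd.
by rewrite -wE.
Qed.

Definition points (C : {set V}) : {set 'I_n} := \bigcup_(v in C) val v.

Lemma mem_points (C : {set V}) (v : V) x : v \in C -> x \in val v -> x \in points C.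
Proof. by move=> vC xv; apply/bigcupP; exists v. Qed.

Lemma disjoint_pointsP (C : {set V}) (v : V) :
  reflect {in C, forall c, adj c v} [disjoint val v & points C].
Proof.
apply: (iffP bigcup_disjointP) => vC c cC.
  by rewrite /kneser_adj disjoint_sym vC.
by rewrite disjoint_sym; apply: vC.
Qed.

Lemma points_setU1 (C : {set V}) (v : V) : points (v |: C) = val v :|: points C.
Proof. by rewrite /points bigcup_setU big_set1. Qed.

Lemma points_setD1 (C : {set V}) (u : V) :
  clique adj C -> u \in C -> points (C :\ u) = points C :\: val u.
Proof.
move=> /cliqueP cC uC; apply/setP => x; rewrite inE.
apply/bigcupP/andP => [[c /setD1P[cu cC'] xc]|[xu /bigcupP[c cC' xc]]].
  by rewrite (mem_points cC' xc) (disjointFr (cC _ _ cC' uC cu) xc).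
by exists c; rewrite // !inE cC' andbT; apply: contraNneq xu => <-.
Qed.

Lemma card_points (C : {set V}) : clique adj C -> #|points C| = 2 * #|C|.
Proof.
move=> /cliqueP cC; rewrite -(card_imset (mem C) val_inj) mulnC.
apply: card_uniform_partition => [A /imsetP [v _ ->]|]; first exact: card_kv.
rewrite /partition cover_imset eqxx /=; apply/andP; split.
  apply/trivIsetP => A B /imsetP[a aC ->] /imsetP[b bC ->] ab.
  by apply: cC => //; apply: contraNneq ab => ->.
by apply/imsetP => -[v _ /esym/eqP]; rewrite -cards_eq0 card_kv.
Qed.

Lemma clique_setU1 (C : {set V}) (v : V) :
  clique adj C -> [disjoint val v & points C] -> clique adj (v |: C).
Proof.
move=> /cliqueP cC /disjoint_pointsP vC; apply/cliqueP.
move=> a b /setU1P[->|aC] /setU1P[->|bC]; rewrite ?eqxx // => ab.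
- by rewrite kneser_adj_sym vC.
- exact: vC.
- exact: cC.
Qed.

Lemma notin_disjoint_points (C : {set V}) (v : V) : [disjoint val v & points C] -> v \notin C.
Proof. by move/disjoint_pointsP => vC; apply/negP => /vC; rewrite kneser_adj_irr. Qed.

Lemma exists_clique k : 2 * k <= n -> exists C : {set V}, clique adj C /\ #|C| = k.
Proof.
elim: k => [_|k IH kn].
  by exists set0; split; [apply/cliqueP => ? ?; rewrite inE | rewrite cards0].
have /IH [C [cC Ck]] : 2 * k <= n by lia.
have : 1 < #|~: points C| by have := cardsC (points C); rewrite card_points // Ck card_ord; lia.
case/kv_of_card => v; rewrite -disjoints_subset => vC.
exists (v |: C); split; first exact: clique_setU1.
by rewrite cardsU1 (notin_disjoint_points vC) Ck.
Qed.

Hypothesis n_ge5 : 5 <= n.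

Lemma kneser_diam2 (u v : V) : exists p, [/\ path adj u p, last u p = v & size p <= 2].
Proof.
have [<-|uv] := eqVneq u v; first by exists [::].
have [euv|/disjointNP [z zu zv]] := boolP (adj u v); first by exists [:: v]; rewrite /= euv.
have : 1 < #|~: (val u :|: val v)|.
  have : 0 < #|val u :&: val v| by apply/card_gt0P; exists z; rewrite inE zu zv.
  have := cardsC (val u :|: val v); rewrite cardsU !card_kv card_ord; lia.
case/kv_of_card => w; rewrite -disjoints_subset => wuv.
exists [:: w; v]; rewrite /= /kneser_adj disjoint_sym.
by rewrite (disjointWr (subsetUl _ _) wuv) (disjointWr (subsetUr _ _) wuv).
Qed.

Local Notation kneser_gp_trans := (gp_set_trans kneser_adj_irr kneser_diam2).
Local Notation kneser_clique_gp := (clique_gp kneser_adj_irr kneser_diam2).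
Local Notation kneser_gp_nbr_uniq := (gp_set_nbr_uniq kneser_adj_irr kneser_diam2).

Lemma clique_replace (C : {set V}) (u v : V) : clique adj C -> u \in C ->
  [disjoint val v & points C] ->
  [/\ legal_move adj C (v |: (C :\ u)), clique adj (v |: (C :\ u)) &
      points (v |: (C :\ u)) = val v :|: (points C :\: val u)].
Proof.
move=> cC uC vC.
have vCu : [disjoint val v & points (C :\ u)].
  by apply: disjointWr vC; apply/bigcupsP => c /setD1P[_ cC']; apply: bigcup_sup.
have cC' : clique adj (v |: (C :\ u)).
  apply: clique_setU1 vCu; apply/cliqueP => a b /setD1P[_ aC] /setD1P[_ bC].
  exact: (cliqueP _ _ cC).
split=> //; last by rewrite points_setU1 points_setD1.
exists u, v; split=> //; last exact: kneser_clique_gp.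
- exact: notin_disjoint_points vC.
- exact: (disjoint_pointsP _ _ vC).
Qed.

Lemma clique_reaches_avoiding (C : {set V}) (P : {set 'I_n}) :
  clique adj C -> 2 * #|C| + #|P| < n ->
  exists2 C', reachable adj C C' & [/\ clique adj C', #|C'| = #|C| & [disjoint P & points C']].
Proof.
have [m] := ubnP #|P :&: points C|; elim: m C => // m IH C PCm cC Cn.
have [PC0|[y]] := set_0Vmem (P :&: points C).
  by exists C; [apply: rt_refl | split=> //; rewrite -setI_eq0 PC0].
rewrite inE => /andP[yP /bigcupP[u uC yu]].
have : 1 < #|~: (points C :|: P)|.
  have : 0 < #|points C :&: P| by apply/card_gt0P; exists y; rewrite inE yP (mem_points uC yu).
  by have := cardsC (points C :|: P); rewrite cardsU card_points // card_ord; lia.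
case/kv_of_card => v; rewrite -disjoints_subset => vCP.
have [mv cC' pC'] := clique_replace cC uC (disjointWr (subsetUl _ _) vCP).
have PC' : P :&: points (v |: (C :\ u)) \subset (P :&: points C) :\ y.
  apply/subsetP => x; rewrite pC' !inE => /andP[xP /orP[xv|/andP[xu xC]]].
    by move/disjointP: vCP => /(_ x xv); rewrite !inE xP orbT.
  by rewrite xP xC !andbT; apply: contraNneq xu => ->.
have [||C'' C'C'' [cC'' C''C PC'']] := IH (v |: (C :\ u)) _ cC'.
- apply: leq_ltn_trans (subset_leq_card PC') _.
  by move: PCm; rewrite (cardsD1 y) !inE yP (mem_points uC yu).
- by rewrite (legal_move_card mv).
by exists C''; [apply: rt_trans (rt_step _ _ _ _ mv) C'C'' | rewrite C''C (legal_move_card mv)].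
Qed.

Lemma clique_reaches (C : {set V}) (t : V) : clique adj C -> 0 < #|C| -> 2 * #|C| + 3 <= n ->
  exists2 C', reachable adj C C' & t \in C'.
Proof.
move=> cC C0 Cn; have [|C' CC' [cC' C'C tC']] := clique_reaches_avoiding (P := val t) cC.
  by rewrite card_kv; lia.
have /card_gt0P [u uC'] : 0 < #|C'| by rewrite C'C.
have [mv _ _] := clique_replace cC' uC' tC'.
by exists (t |: (C' :\ u)); [apply: rt_trans CC' (rt_step _ _ _ _ mv) | rewrite setU11].
Qed.

Lemma mobile_clique (C : {set V}) :
  clique adj C -> 0 < #|C| -> 2 * #|C| + 3 <= n -> mobile_gp_set adj C.
Proof.
move=> cC C0 Cn; apply: mobile_of_reachable kneser_adj_sym (kneser_clique_gp cC) _ => t.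
exact: clique_reaches.
Qed.

Definition star (x : 'I_n) (L : {set 'I_n}) : {set V} :=
  [set v : V | (x \in val v) && (val v \subset x |: L)].

Section Star.
Variable x : 'I_n.

Lemma starP (L : {set 'I_n}) (v : V) : x \notin L ->
  reflect (exists2 y, y \in L & val v = [set x; y]) (v \in star x L).
Proof.
move=> xL; rewrite inE; apply: (iffP andP) => [[/kv_other [y yx vE] vL]|[y yL ->]].
  exists y => //; have /(subsetP vL) : y \in val v by rewrite vE !inE eqxx orbT.
  by rewrite !inE (negbTE yx).
by rewrite !inE eqxx subUset !sub1set !inE eqxx yL orbT.
Qed.

Lemma star_pair (L : {set 'I_n}) y : x \notin L -> y \in L ->
  exists2 v : V, v \in star x L & val v = [set x; y].
Proof.
move=> xL yL; have [|v vE] := kv_of_pair (a := x) (b := y).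
  by apply: contraNneq xL => ->.
by exists v => //; apply/(starP _ xL); exists y.
Qed.

Lemma card_star (L : {set 'I_n}) : x \notin L -> #|star x L| = #|L|.
Proof.
move=> xL; have inj : {in L &, injective (fun y => [set x; y])}.
  by move=> y1 y2 y1L _; apply: set2_inj; apply: contraNneq xL => <-.
rewrite -(card_imset _ val_inj) -(card_in_imset inj); apply: eq_card => A.
apply/imsetP/imsetP => [[v /starP [//|y yL ->] ->]|[y yL ->]]; first by exists y.
by have [v vS vE] := star_pair xL yL; exists v.
Qed.

Lemma star_stable (L : {set 'I_n}) : stable adj (star x L).
Proof.
apply/stableP => a b; rewrite !inE => /andP[xa _] /andP[xb _].
by apply/disjointNP; exists x.
Qed.

Lemma star_gp (L : {set 'I_n}) : gp_set adj (star x L).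
Proof.
apply: kneser_gp_nbr_uniq => a b c aS bS _ eab.
by have /negP := stableP _ _ (star_stable L) a b aS bS.
Qed.

Lemma star_D1 (L : {set 'I_n}) (u : V) d : x \notin L -> d \in L -> val u = [set x; d] ->
  star x L :\ u = star x (L :\ d).
Proof.
move=> xL dL uE; have xLd : x \notin L :\ d by rewrite !inE negb_and xL orbT.
apply/setP => v; apply/setD1P/(starP _ xLd) => [[vu /(starP _ xL) [y yL vE]]|[y]].
  exists y; rewrite // !inE yL andbT; apply: contraNneq vu => yd.
  by apply/eqP/val_inj; rewrite vE uE yd.
move=> /setD1P[yd yL] vE; split; last by apply/(starP _ xL); exists y.
apply: contraNneq yd => vu; apply/eqP/(set2_inj (x := x)); first by apply: contraNneq xL => <-.
by rewrite -vE -uE vu.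
Qed.

(* The only edge of the new configuration joins [w] to the star vertex whose
   leaf is the point of [L] outside {b, c, d}. *)
Lemma star_paw (L : {set 'I_n}) (u w : V) b c d : x \notin L -> #|L| = 4 ->
  b \in L -> c \in L -> d \in L -> b != c -> b != d -> c != d ->
  val u = [set x; d] -> val w = [set b; c] ->
  legal_move adj (star x L) (w |: star x (L :\ d)).
Proof.
move=> xL cardL bL cL dL bc bd cd uE wE.
have xw : x \notin val w by rewrite wE !inE; apply/norP; split; apply: contraNneq xL => ->.
have xLd : x \notin L :\ d by rewrite !inE negb_and xL orbT.
have leaf a : a \in star x (L :\ d) -> adj a w ->
    exists2 y, y \in L :\ d :\ b :\ c & val a = [set x; y].
  case/(starP _ xLd) => y yLd aE /disjointP/(_ y); rewrite aE wE !inE eqxx orbT => /(_ isT).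
  by rewrite negb_or => /andP[yb yc]; exists y; rewrite // 2!in_setD1 yb yc.
have leaf_uniq : #|L :\ d :\ b :\ c| <= 1.
  move: cardL; rewrite (cardsD1 d) (cardsD1 b (L :\ d)) (cardsD1 c (L :\ d :\ b)).
  by rewrite !inE dL bL cL bd cd (eq_sym c b) bc !add1n => -[->].
have nonadj a1 b1 : a1 \in star x (L :\ d) -> b1 \in star x (L :\ d) -> adj a1 b1 = false.
  by move=> a1S b1S; apply/negbTE; exact: (stableP _ _ (star_stable _) _ _ a1S b1S).
exists u, w; split.
- by apply/(starP _ xL); exists d.
- by rewrite inE negb_and xw.
- rewrite /kneser_adj uE; apply/disjointP => z; rewrite !inE wE.
  case/orP=> /eqP->; first by rewrite -wE.
  by rewrite !inE negb_or (eq_sym d b) bd (eq_sym d c) cd.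
- by rewrite (star_D1 xL dL uE).
apply: kneser_gp_nbr_uniq => a1 b1 c1.
move=> /setU1P[->|a1S] /setU1P[->|b1S]; rewrite ?kneser_adj_irr //.
- by case/setU1P=> [->|c1S] // _; rewrite nonadj.
- case/setU1P=> [->|c1S]; first by move=> _; rewrite kneser_adj_irr.
  move=> a1w; rewrite kneser_adj_sym => c1w.
  have [ya ya_leaf aE] := leaf a1 a1S a1w; have [yc yc_leaf cE] := leaf c1 c1S c1w.
  by apply: val_inj; rewrite aE cE (card_le1_eqP leaf_uniq ya yc).
- by move=> _; rewrite nonadj.
Qed.

Lemma leaves_swap (L : {set 'I_n}) d f : x \notin L -> #|L| = 4 -> d \in L -> f \notin x |: L ->
  x \notin f |: L :\ d /\ #|f |: L :\ d| = 4.
Proof.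
move=> xL cardL dL; rewrite in_setU1 negb_or => /andP[fx fL].
rewrite !inE negb_or negb_and xL eq_sym fx orbT; split=> //.
by rewrite cardsU1 !inE negb_and fL orbT; move: cardL; rewrite (cardsD1 d) dL.
Qed.

Lemma star_swap (L : {set 'I_n}) d f : x \notin L -> #|L| = 4 -> d \in L -> f \notin x |: L ->
  reachable adj (star x L) (star x (f |: L :\ d)).
Proof.
move=> xL cardL dL fxL; have [xL' cardL'] := leaves_swap xL cardL dL fxL.
move: fxL; rewrite in_setU1 negb_or => /andP[fx fL].
have /card_gt1P [b [c [bLd cLd bc]]] : 1 < #|L :\ d|.
  by move: cardL; rewrite (cardsD1 d) dL add1n => -[->].
move: bLd cLd; rewrite !in_setD1 => /andP[bd bL] /andP[cd cL].
have bf : b != f by apply: contraNneq fL => <-.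
have cf : c != f by apply: contraNneq fL => <-.
have xd : x != d by apply: contraNneq xL => ->.
have xf : x != f by rewrite eq_sym.
have [u uE] := kv_of_pair xd; have [u' u'E] := kv_of_pair xf; have [w wE] := kv_of_pair bc.
have m := star_paw xL cardL bL cL dL bc bd cd uE wE.
have bL' : b \in f |: L :\ d by rewrite !inE bd bL orbT.
have cL' : c \in f |: L :\ d by rewrite !inE cd cL orbT.
have m' := star_paw xL' cardL' bL' cL' (setU11 f _) bc bf cf u'E wE.
rewrite setU1K ?inE ?negb_and ?fL ?orbT // in m'.
have m'' := legal_move_sym kneser_adj_sym (@star_gp _) m'.
exact: rt_trans (rt_step _ _ _ _ m) (rt_step _ _ _ _ m'').
Qed.

Lemma star_reaches_leaves (L P : {set 'I_n}) : x \notin L -> #|L| = 4 -> x \notin P -> #|P| <= 4 ->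
  exists L' : {set 'I_n},
    [/\ x \notin L', #|L'| = 4, P \subset L' & reachable adj (star x L) (star x L')].
Proof.
move=> + + xP P4; have [m] := ubnP #|P :\: L|; elim: m L => // m IH L PLm xL cardL.
have [PL|/subsetPn [f fP fL]] := boolP (P \subset L); first by exists L; split=> //; apply: rt_refl.
have /card_gt0P [d] : 0 < #|L :\: P|.
  have : #|L :&: P| <= #|P :\ f|.
    apply/subset_leq_card/subsetP => z; rewrite !inE => /andP[zL ->].
    by rewrite andbT; apply: contraNneq fL => <-.
  by move: (cardsID P L) P4; rewrite cardL (cardsD1 f P) fP; lia.
rewrite inE => /andP[dP dL].
have fxL : f \notin x |: L by rewrite in_setU1 negb_or fL andbT; apply: contraNneq xP => <-.
have [xL' cardL'] := leaves_swap xL cardL dL fxL.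
have [|L' [xL'' cardL'' PL' reach]] := IH (f |: L :\ d) _ xL' cardL'.
  have : P :\: (f |: L :\ d) \subset (P :\: L) :\ f.
    apply/subsetP => z; rewrite !inE negb_or negb_and negbK.
    case/andP=> /andP[zf /orP[/eqP zd|zL]] zP; last by rewrite zf zL zP.
    by move: dP; rewrite -zd zP.
  move/subset_leq_card; move: PLm; rewrite (cardsD1 f (P :\: L)) !inE fP fL /=; lia.
by exists L'; split=> //; apply: rt_trans (star_swap xL cardL dL fxL) reach.
Qed.

Lemma star_reaches (L : {set 'I_n}) (t : V) : x \notin L -> #|L| = 4 ->
  exists2 C, reachable adj (star x L) C & t \in C.
Proof.
move=> xL cardL; have [xt|xt] := boolP (x \in val t).
  have [y yx tE] := kv_other xt.
  have [||L' [xL' _ yL' reach]] := star_reaches_leaves (P := [set y]) xL cardL.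
  - by rewrite inE eq_sym.
  - by rewrite cards1.
  by exists (star x L') => //; apply/(starP _ xL'); exists y; rewrite // -sub1set.
have [|L' [xL' cardL' tL' reach]] := star_reaches_leaves xL cardL xt; first by rewrite card_kv.
have [p [q [pq tE]]] := kvP t.
have /card_gt0P [d] : 0 < #|L' :\: val t|.
  by have := cardsID (val t) L'; rewrite cardL' (setIidPr tL') card_kv; lia.
rewrite inE tE !inE negb_or => /andP[/andP[dp dq] dL'].
have pd : p != d by rewrite eq_sym.
have qd : q != d by rewrite eq_sym.
have pL' : p \in L' by apply: (subsetP tL'); rewrite tE !inE eqxx.
have qL' : q \in L' by apply: (subsetP tL'); rewrite tE !inE eqxx orbT.
have [|u uE] := kv_of_pair (a := x) (b := d); first by apply: contraNneq xL' => ->.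
have m := star_paw xL' cardL' pL' qL' dL' pq pd qd uE tE.
by exists (t |: star x (L' :\ d)); [apply: rt_trans reach (rt_step _ _ _ _ m) | rewrite setU11].
Qed.

Lemma mobile_star (L : {set 'I_n}) : x \notin L -> #|L| = 4 -> mobile_gp_set adj (star x L).
Proof.
move=> xL cardL; apply: mobile_of_reachable kneser_adj_sym (@star_gp _) _ => t.
exact: star_reaches.
Qed.

End Star.

Lemma exists_mobile_star : exists S : {set V}, mobile_gp_set adj S /\ #|S| = 4.
Proof.
have x : 'I_n := Ordinal (leq_trans (isT : 0 < 5) n_ge5).
have /card_geqP [s [us size_s sx]] : 4 <= #|~: [set x]| by rewrite cardsC1 card_ord; lia.
have xs : x \notin [set y in s] by rewrite inE; apply/negP => /sx; rewrite !inE eqxx.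
have cards : #|[set y in s]| = 4 by rewrite cardsE (card_uniqP us) size_s.
by exists (star x [set y in s]); rewrite card_star //; split=> //; apply: mobile_star.
Qed.

(* Pairwise intersecting 2-sets without a common point form a triangle
   {a, b}, {b, c}, {a, c}. *)
Lemma stable_common_point (D : {set V}) : stable adj D -> 4 <= #|D| ->
  exists x, forall d, d \in D -> x \in val d.
Proof.
move=> /stableP sD D4.
have /card_gt1P [d1 [d2 [d1D d2D d12]]] : 1 < #|D| by apply: leq_trans D4.
have /disjointNP [x x1 x2] := sD d1 d2 d1D d2D.
exists x => d dD; apply: contraTT D4 => xd; rewrite -ltnNge ltnS.
have [a ax E1] := kv_other x1; have [b bx E2] := kv_other x2.
have ab : a != b by apply: contraNneq d12 => ab; apply/eqP/val_inj; rewrite E1 E2 ab.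
have dE : val d = [set a; b].
  apply: set2_of_card2 (card_kv d) ab _ _.
    exact: nonadj_mem (sD _ _ d1D dD) E1 xd.
  exact: nonadj_mem (sD _ _ d2D dD) E2 xd.
have /subset_leq_card : D \subset [set d1; d2; d].
  apply/subsetP => d' d'D; rewrite !inE.
  have [xd'|xd'] := boolP (x \in val d').
    have [y yx E'] := kv_other xd'.
    have := nonadj_mem (sD _ _ d'D dD) E' xd; rewrite dE !inE => /orP[] /eqP yE.
      by rewrite (_ : d' = d1) ?eqxx //; apply: val_inj; rewrite E' E1 yE.
    by rewrite (_ : d' = d2) ?eqxx ?orbT //; apply: val_inj; rewrite E' E2 yE.
  have d'E : val d' = [set a; b].
    apply: set2_of_card2 (card_kv d') ab _ _.
      exact: nonadj_mem (sD _ _ d1D d'D) E1 xd'.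
    exact: nonadj_mem (sD _ _ d2D d'D) E2 xd'.
  by rewrite (_ : d' = d) ?eqxx ?orbT //; apply: val_inj; rewrite d'E dE.
by move/leq_trans; apply; rewrite card_set3_le.
Qed.

(* [v] avoids [x], so it meets at most two pairs of [S :\ u]; two others are
   adjacent to [v] but not to each other. *)
Lemma star_no_legal_move (S S' : {set V}) x : 5 <= #|S| -> (forall s, s \in S -> x \in val s) ->
  ~ legal_move adj S S'.
Proof.
move=> S5 Sx [u [v [uS vS uv -> gS']]].
have xv : x \notin val v by rewrite (disjointFr uv (Sx u uS)).
have uniq_pt a d1 d2 : a \in val v -> d1 \in S :\ u -> d2 \in S :\ u ->
    a \in val d1 -> a \in val d2 -> d1 = d2.
  move=> av /setD1P[_ d1S] /setD1P[_ d2S] ad1 ad2.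
  apply: (kv_eq _ (Sx _ d1S) ad1 (Sx _ d2S) ad2).
  by apply: contraNneq xv => ->.
have : 2 + 2 <= #|S :\ u| by move: S5; rewrite (cardsD1 u S) uS add1n ltnS.
move/leq_trans/(_ (card_adj_ge uniq_pt)); rewrite leq_add2r.
case/card_gt1P=> d1 [d2 [/setIdP[d1Su d1v] /setIdP[d2Su d2v] d12]].
have vd2 : adj v d2 by rewrite kneser_adj_sym.
have d1d2 := kneser_gp_trans gS' (setU1r v d1Su) (setU11 v _) (setU1r v d2Su) d1v vd2 d12.
move: d1Su d2Su => /setD1P[_ /Sx x1] /setD1P[_ /Sx x2].
by rewrite (disjointFr d1d2 x1) in x2.
Qed.

Lemma mobile_not_stable (S : {set V}) : mobile_gp_set adj S -> 5 <= #|S| -> ~~ stable adj S.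
Proof.
move=> mS S5; apply/negP => sS; have [x Sx] := stable_common_point sS (ltnW S5).
have /kv_of_card [t] : 1 < #|~: [set x]| by rewrite cardsC1 card_ord; lia.
rewrite -disjoints_subset disjoint_sym disjoints1 => xt.
have [C -> tS] : exists2 C, C = S & t \in C.
  apply: (mobile_invariant (P := fun C => C = S) mS erefl) => C C' ->.
  by move/(star_no_legal_move S5 Sx).
by rewrite Sx in xt.
Qed.

Lemma gp_edge_split (C : {set V}) p q r : gp_set adj C -> p \in C -> q \in C -> r \in C ->
  adj p q -> val r \subset val p :|: val q \/ adj r p /\ adj r q.
Proof.
move=> gC pC qC rC epq.
have [erp|nrp] := boolP (adj r p); have [erq|nrq] := boolP (adj r q).
- by right.
- left; have [->|rq] := eqVneq r q; first exact: subsetUr.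
  case/negP: nrq; rewrite kneser_adj_sym; apply: (kneser_gp_trans gC qC pC rC).
  + by rewrite kneser_adj_sym.
  + by rewrite kneser_adj_sym.
  + by rewrite eq_sym.
- left; have [->|rp] := eqVneq r p; first exact: subsetUl.
  case/negP: nrp; rewrite kneser_adj_sym; apply: (kneser_gp_trans gC pC qC rC epq).
  + by rewrite kneser_adj_sym.
  + by rewrite eq_sym.
left; have /disjointNP [z1 z1r z1p] := nrp; have /disjointNP [z2 z2r z2q] := nrq.
have z12 : z1 != z2 by apply: contraTneq z2q => <-; rewrite (disjointFr epq z1p).
by rewrite (set2_of_card2 (card_kv r) z12 z1r z2r) subUset !sub1set !inE z1p z2q orbT.
Qed.

Lemma gp_edge_inside (C : {set V}) p q c : gp_set adj C -> p \in C -> q \in C -> c \in C ->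
  adj p q -> val c \subset val p :|: val q -> c != p -> c != q ->
  forall r, r \in C -> val r \subset val p :|: val q.
Proof.
move=> gC pC qC cC epq cpq cp cq r rC.
case: (gp_edge_split gC pC qC rC epq) => // -[erp erq].
have erc : adj r c.
  apply/disjointP => z zr; apply/negP => /(subsetP cpq).
  by rewrite inE (disjointFr erp zr) (disjointFr erq zr).
have npc : ~~ adj p c.
  apply/negP => epc; case/eqP: cq; apply: kv_sub_eq; apply/subsetP => z zc.
  by move/subsetP/(_ z zc): cpq; rewrite inE (disjointFl epc zc).
case/negP: npc; apply: (kneser_gp_trans gC pC rC cC _ erc).
- by rewrite kneser_adj_sym.
- by rewrite eq_sym; exact: cp.
Qed.

Lemma gp_edge_nonedge_inside (C : {set V}) p q r1 r2 : gp_set adj C -> p \in C -> q \in C ->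
  r1 \in C -> r2 \in C -> adj p q -> r1 != r2 -> ~~ adj r1 r2 ->
  forall r, r \in C -> val r \subset val p :|: val q.
Proof.
move=> gC pC qC r1C r2C epq r12 nr12.
have inner c : c \in C -> c != p -> c != q -> ~~ (adj c p && adj c q) ->
    forall r, r \in C -> val r \subset val p :|: val q.
  move=> cC cp cq nc; apply: (gp_edge_inside gC pC qC cC epq _ cp cq).
  by case: (gp_edge_split gC pC qC cC epq) => // -[cp' cq']; rewrite cp' cq' in nc.
have [/andP[e1p e1q]|n1] := boolP (adj r1 p && adj r1 q).
  apply: (inner r2 r2C).
  - by apply: contraNneq nr12 => ->.
  - by apply: contraNneq nr12 => ->.
  apply/negP => /andP[e2p _]; case/negP: nr12; apply: (kneser_gp_trans gC r1C pC r2C e1p _ r12).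
  by rewrite kneser_adj_sym.
have [r1p|r1p] := eqVneq r1 p.
  apply: (inner r2 r2C); first by rewrite -r1p eq_sym.
    by apply: contraNneq nr12 => ->; rewrite r1p.
  by rewrite -r1p kneser_adj_sym (negbTE nr12).
have [r1q|r1q] := eqVneq r1 q.
  apply: (inner r2 r2C); last by rewrite -r1q andbC kneser_adj_sym (negbTE nr12).
    by apply: contraNneq nr12 => ->; rewrite r1q kneser_adj_sym.
  by rewrite -r1q eq_sym.
exact: inner r1 r1C r1p r1q n1.
Qed.

Lemma legal_move_inside (W : {set 'I_n}) (C C' : {set V}) : #|W| = 4 -> 5 <= #|C| ->
  (forall c, c \in C -> val c \subset W) -> legal_move adj C C' ->
  forall c, c \in C' -> val c \subset W.
Proof.
move=> cardW C5 CW [u [v [uC vC euv C'E gC']]].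
have D4 : 4 <= #|C :\ u| by move: C5; rewrite (cardsD1 u C) uC add1n.
have DC' d : d \in C :\ u -> d \in C' by rewrite C'E; apply: setU1r.
have DW d : d \in C :\ u -> val d \subset W by case/setD1P => _ /CW.
have [sD|/stablePn [p [q [pD qD epq]]]] := boolP (stable adj (C :\ u)).
  have [x Dx] := stable_common_point sD D4.
  have /card_gt0P [d0 d0D] : 0 < #|C :\ u| by apply: leq_trans D4.
  have xW : x \in W := subsetP (DW d0 d0D) x (Dx d0 d0D).
  have /subset_leq_card : C :\ u \subset star x (W :\ x).
    by apply/subsetP => d dD; rewrite inE Dx //= setD1K //; exact: DW.
  have W3 : #|W :\ x| = 3 by move: cardW; rewrite (cardsD1 x W) xW add1n => -[].
  by rewrite card_star ?setD11 // W3 => /(leq_trans D4).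
have pqW : val p :|: val q = W.
  apply/eqP; rewrite eqEcard subUset !DW //= cardW cardsU !card_kv.
  by rewrite (disjoint_setI0 epq) cards0.
have qp : q != p by apply: contraTneq epq => ->; rewrite kneser_adj_irr.
have /card_gt0P [t] : 0 < #|C :\ u :\ p :\ q|.
  move: D4; rewrite (cardsD1 p (C :\ u)) pD (cardsD1 q (C :\ u :\ p)) in_setD1 qp qD.
  by rewrite !add1n !ltnS; apply: ltnW.
rewrite 2!in_setD1 => /and3P[tq tp tD] c cC'.
have tW : val t \subset val p :|: val q by rewrite pqW DW.
by rewrite -pqW; apply: (gp_edge_inside gC' (DC' p pD) (DC' q qD) (DC' t tD) epq tW tp tq cC').
Qed.

Lemma mobile_gp_clique (S : {set V}) : mobile_gp_set adj S -> 5 <= #|S| -> clique adj S.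
Proof.
move=> mS S5; apply: contraT => /cliquePn [r1 [r2 [r1S r2S r12 nr12]]].
have /stablePn [p [q [pS qS epq]]] := mobile_not_stable mS S5.
pose W := val p :|: val q.
have cardW : #|W| = 4 by rewrite cardsU !card_kv (disjoint_setI0 epq) cards0.
have SW := gp_edge_nonedge_inside mS.1 pS qS r1S r2S epq r12 nr12.
have /card_gt0P [z zW] : 0 < #|~: W| by have := cardsC W; rewrite cardW card_ord; lia.
have /card_gt0P [a ap] : 0 < #|val p| by rewrite card_kv.
have [|t tE] := kv_of_pair (a := a) (b := z).
  by apply: contraTneq zW => <-; rewrite inE negbK inE ap.
have [C [_ CW] tC] : exists2 C : {set V},
    #|C| = #|S| /\ (forall c : V, c \in C -> val c \subset W) & t \in C.
  apply: (mobile_invariant mS (conj erefl SW)) => C C' [cardC CW] m.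
  by split; [rewrite (legal_move_card m) | apply: (legal_move_inside cardW _ CW m); rewrite cardC].
by move: zW; rewrite inE (subsetP (CW t tC)) // tE !inE eqxx orbT.
Qed.

(* [v] meets at most two pairs of [C :\ u], so it is adjacent to one of them,
   d0, and then to all: otherwise c - d0 - v would be an induced path. *)
Lemma clique_move_disjoint (C C' : {set V}) : clique adj C -> 4 <= #|C| -> legal_move adj C C' ->
  exists u v : V, [/\ u \in C, [disjoint val v & points C] & C' = v |: (C :\ u)].
Proof.
move=> cC C4 [u [v [uC vC euv C'E gC']]]; exists u, v; split=> //.
have uniq_pt a d1 d2 : a \in val v -> d1 \in C :\ u -> d2 \in C :\ u ->
    a \in val d1 -> a \in val d2 -> d1 = d2.
  move=> _ /setD1P[_ d1C] /setD1P[_ d2C] a1 a2; apply/eqP; apply: contraT => d12.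
  by rewrite (disjointFr (cliqueP _ _ cC d1 d2 d1C d2C d12) a1) in a2.
have : 1 + 2 <= #|C :\ u| by move: C4; rewrite (cardsD1 u C) uC add1n ltnS.
move/leq_trans/(_ (card_adj_ge uniq_pt)); rewrite leq_add2r.
case/card_gt0P=> d0 /setIdP [/setD1P[d0u d0C] d0v].
have inC' c : c \in C -> c != u -> c \in C' by move=> cC' cu; rewrite C'E !inE cu cC' orbT.
apply/disjoint_pointsP => c cinC.
have [->|cu] := eqVneq c u; first exact: euv.
have [->|cd0] := eqVneq c d0; first exact: d0v.
have cd0_adj := cliqueP _ _ cC c d0 cinC d0C cd0.
apply: (kneser_gp_trans gC' (inC' c cinC cu) (inC' d0 d0C d0u) _ cd0_adj d0v).
  by rewrite C'E setU11.
by apply: contraNneq vC => <-.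
Qed.

Lemma disjoint_points_uniq (C : {set V}) (v w : V) : clique adj C -> n <= 2 * #|C| + 2 ->
  [disjoint val v & points C] -> [disjoint val w & points C] -> v = w.
Proof.
move=> cC Cn; have complE (u : V) : [disjoint val u & points C] -> val u = ~: points C.
  rewrite disjoints_subset => uC; apply/eqP; rewrite eqEcard uC card_kv.
  by have := cardsC (points C); rewrite card_points // card_ord; lia.
by move=> /complE vE /complE wE; apply: val_inj; rewrite vE wE.
Qed.

(* For a clique [S] with n <= 2|S| + 2, the vertices disjoint from
   [points S] reduce to at most the single pair of uncovered points. *)
Definition blocks (S : {set V}) : {set V} :=
  [set p : V | (p \in S) || [disjoint val p & points S]].

Lemma legal_move_clique_blocks (S C C' : {set V}) : clique adj S -> clique adj C -> 4 <= #|C| ->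
  n <= 2 * #|C| + 2 -> C \subset blocks S -> legal_move adj C C' ->
  clique adj C' /\ C' \subset blocks S.
Proof.
move=> cS cC C4 Cn CS m; have [u [v [uC vC ->]]] := clique_move_disjoint cC C4 m.
have [_ cC' _] := clique_replace cC uC vC; split=> //.
apply/subsetP => w /setU1P[->|/setD1P[_ /(subsetP CS)] //].
rewrite inE; have [_|/disjointNP [z zv /bigcupP [s sS zs]]] := boolP [disjoint val v & points S].
  by rewrite orbT.
suff sC : [disjoint val s & points C] by rewrite (disjoint_points_uniq cC Cn vC sC) sS.
apply/disjoint_pointsP => c cC1; move: (subsetP CS c cC1); rewrite inE => /orP[cS1|].
  apply: (cliqueP _ _ cS c s cS1 sS); apply: contraTneq zs => <-.
  by apply/negP => /(mem_points cC1); rewrite (disjointFr vC zv).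
by move/disjoint_pointsP/(_ s sS); rewrite kneser_adj_sym.
Qed.

Lemma mobile_clique_card (S : {set V}) : mobile_gp_set adj S -> clique adj S -> 4 <= #|S| ->
  2 * #|S| + 3 <= n.
Proof.
move=> mS cS S4; apply: contraT; rewrite -ltnNge => Sn.
have {}Sn : n <= 2 * #|S| + 2 by rewrite -ltnS -addnS.
have /card_gt1P [s1 [s2 [s1S s2S s12]]] : 1 < #|S| by apply: leq_trans S4.
have e12 := cliqueP _ _ cS s1 s2 s1S s2S s12.
have /card_gt0P [a a1] : 0 < #|val s1| by rewrite card_kv.
have /card_gt0P [c c2] : 0 < #|val s2| by rewrite card_kv.
have ac : a != c by apply: contraTneq c2 => <-; rewrite (disjointFr e12 a1).
have [t tE] := kv_of_pair ac.
have [C [_ _ CS] tC] : exists2 C : {set V},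
    [/\ clique adj C, #|C| = #|S| & C \subset blocks S] & t \in C.
  apply: (mobile_invariant mS) => [|C C' [cC cardC CS] m].
    by split=> //; apply/subsetP => p pS; rewrite inE pS.
  rewrite -cardC in S4 Sn; have [cC' C'S] := legal_move_clique_blocks cS cC S4 Sn CS m.
  by split; rewrite ?(legal_move_card m).
have ta : a \in val t by rewrite tE !inE eqxx.
move/subsetP/(_ t tC): CS; rewrite inE => /orP[tS|/disjointP/(_ a ta)]; last first.
  by rewrite (mem_points s1S a1).
have ts1 : t != s1.
  by apply: contraTneq c2 => ts1; rewrite (disjointFr e12) // -ts1 tE !inE eqxx orbT.
by rewrite (disjointFr (cliqueP _ _ cS t s1 tS s1S ts1) ta) in a1.
Qed.

End Kneser.

Theorem theorem3p1 (n : nat) : 5 <= n ->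
  is_mob (@kneser_adj n) (maxn 4 ((n - 3) %/ 2)).
Proof.
move=> n_ge5; split.
  have [_|k_gt4] := leqP ((n - 3) %/ 2) 4; first exact: exists_mobile_star.
  have [|C [cC cardC]] := @exists_clique n ((n - 3) %/ 2); first lia.
  exists C; split=> //; apply: (mobile_clique n_ge5 cC); rewrite cardC; lia.
move=> S mS; have [S_le4|S_gt4] := leqP #|S| 4; first exact: leq_trans S_le4 (leq_maxl _ _).
have := mobile_clique_card n_ge5 mS (mobile_gp_clique n_ge5 mS S_gt4) (ltnW S_gt4).
move=> Sn; apply: leq_trans (leq_maxr _ _).
by rewrite leq_divRL // mulnC -(leq_add2r 3) subnK; [exact: Sn | lia].
Qed.
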